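(* For every integer $s \geq 1$, $$\mathsf {Brac}_{3,s}\cap \{\alpha_3=\beta_2=0\}=\left\{ \big( (\alpha_1, 1-\alpha_1, 0), (\beta_1, 0, 1-\beta_1) \big) \, : \, \alpha_1,\beta_1\in[0,1],\ \lceil \alpha_1 s\rceil + \lceil \beta_1 s\rceil \leq s \right\},$$ where $\{\alpha_3=\beta_2=0\}$ denotes the set of pairs $(\alpha,\beta)\in\Delta_3^2$ with $\alpha_3=0$ and $\beta_2=0$.
   Context: $\Delta_d=\{\alpha\in\mathbb R^d:\alpha_i\ge0,\ \sum_i\alpha_i=1\}$. For $s\ge1$, $\mathsf{Brac}_{d,s}$ is the set of $(\alpha,\beta)\in\Delta_d^2$ for which there exist $A_1,\dots,A_d,B_1,\dots,B_d\in M_s(\mathbb C)$ with $\sum_i A_iA_i^*=\sum_iB_iB_i^*=I_s$, $\sum_iA_iB_i^*=0$, and $\tfrac1s\|A_i\|_F^2=\alpha_i$, $\tfrac1s\|B_i\|_F^2=\beta_i$ for all $i$, where $\|X\|_F=\operatorname{Tr}(XX^* )^{1/2}$. *)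

From HB Require Import structures.
From mathcomp Require Import all_boot all_order all_algebra.
From mathcomp Require Import complex.
From mathcomp Require Import reals.
Set Implicit Arguments. Unset Strict Implicit. Unset Printing Implicit Defensive.
Import Order.TTheory GRing.Theory Num.Theory.
Local Open Scope ring_scope.

Definition adj (R : realType) (s : nat) (A : 'M[R[i]]_s) : 'M[R[i]]_s :=
  map_mx (@conjc R) A^T.

Definition simplex (R : realType) (d : nat) (a : 'I_d -> R) : Prop :=
  (forall i, 0 <= a i) /\ \sum_(i < d) a i = 1.

Definition Brac (R : realType) (d s : nat) (a b : 'I_d -> R) : Prop :=
  simplex a /\ simplex b /\
  exists (A B : 'I_d -> 'M[R[i]]_s),
    \sum_(i < d) (A i *m adj (A i)) = 1%:M /\
    \sum_(i < d) (B i *m adj (B i)) = 1%:M /\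
    \sum_(i < d) (A i *m adj (B i)) = 0 /\
    (forall i, \tr (A i *m adj (A i)) = ((s%:R * a i)%:C)%C) /\
    (forall i, \tr (B i *m adj (B i)) = ((s%:R * b i)%:C)%C).

Definition vec3 (R : realType) (x0 x1 x2 : R) : 'I_3 -> R :=
  fun i => match nat_of_ord i with 0 => x0 | 1 => x1 | _ => x2 end.

From HB Require Import structures.
From mathcomp Require Import all_boot all_order all_algebra.
From mathcomp Require Import complex reals spectral.
From mathcomp Require Import zify ring lra.
From Stdlib Require Import FunctionalExtensionality.

(* When alpha_3 = beta_2 = 0 the trace conditions force A_3 = B_2 = 0, so
   A_1 A_1^* + A_2 A_2^* = I and B_1 B_1^* + B_3 B_3^* = I.  Compressing the
   first identity to the column space of A_1 (through an orthonormal basis of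
   it) gives s alpha_1 = tr (A_1 A_1^* ) <= rank A_1, likewise
   s beta_1 <= rank B_1, and A_1 B_1^* = 0 makes the row spaces of A_1 and B_1
   orthogonal, so rank A_1 + rank B_1 <= s.  Conversely, for
   r = ceil (alpha_1 s) and t = ceil (beta_1 s), take A_1 and B_1 diagonal with
   squared entries alpha_1 s / r on the first r coordinates and beta_1 s / t on
   the next t coordinates, and A_2, B_3 the diagonal complements. *)

Set Implicit Arguments. Unset Strict Implicit. Unset Printing Implicit Defensive.
Import Order.TTheory GRing.Theory Num.Theory.
Local Open Scope ring_scope.
Local Open Scope sesquilinear_scope.

Section TraceForm.
Variable C : numClosedFieldType.

Lemma trmxC_mul m n p (A : 'M[C]_(m, n)) (B : 'M[C]_(n, p)) :
  (A *m B)^t* = B^t* *m A^t*.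
Proof. by rewrite trmx_mul map_mxM. Qed.

Lemma mxrank_trmxC m n (A : 'M[C]_(m, n)) : \rank (A^t*) = \rank A.
Proof. by rewrite mxrank_map mxrank_tr. Qed.

Lemma mxtrace_mul_trmxC m n (X : 'M[C]_(m, n)) :
  \tr (X *m X^t*) = \sum_i \sum_j X i j * (X i j)^*.
Proof.
by apply: eq_bigr => i _; rewrite mxE; apply: eq_bigr => j _; rewrite !mxE.
Qed.

Lemma mxtrace_mul_trmxC_ge0 m n (X : 'M[C]_(m, n)) : 0 <= \tr (X *m X^t*).
Proof.
rewrite mxtrace_mul_trmxC.
by do 2![apply: sumr_ge0 => ? _]; apply: mul_conjC_ge0.
Qed.

Lemma mxtrace_mul_trmxC_eq0 m n (X : 'M[C]_(m, n)) :
  (\tr (X *m X^t*) == 0) = (X == 0).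
Proof.
apply/idP/eqP => [|->]; last by rewrite mul0mx mxtrace0.
rewrite mxtrace_mul_trmxC psumr_eq0 => [/allP X0|i _]; last first.
  by apply: sumr_ge0 => j _; apply: mul_conjC_ge0.
apply/matrixP => i j; move/implyP: (X0 i (mem_index_enum _)) => /(_ isT).
rewrite psumr_eq0 => [/allP/(_ j (mem_index_enum _))|k _]; last exact: mul_conjC_ge0.
by rewrite mul_conjC_eq0 mxE => /eqP.
Qed.

Lemma submx_mulmxKtV m n p (A : 'M[C]_(m, n)) (W : 'M[C]_(p, n)) :
  W \is unitarymx -> (A <= W)%MS -> A *m W^t* *m W = A.
Proof. by move=> Wu /submxP[D ->]; rewrite mulmxtVK. Qed.

Lemma unitary_row_basis m n (A : 'M[C]_(m, n)) :
  exists2 W : 'M[C]_(\rank A, n), W \is unitarymx & A *m W^t* *m W = A.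
Proof.
have Wu : schmidt (row_base A) \is unitarymx.
  exact/schmidt_unitarymx/rank_leq_col.
exists (schmidt (row_base A)); rewrite // submx_mulmxKtV //.
by rewrite (eqmx_schmidt_free (row_base_free A)) eq_row_base.
Qed.

Lemma mxtrace_mul_trmxC_le_rank m n p (A : 'M[C]_(m, n)) (B : 'M[C]_(m, p)) :
  A *m A^t* + B *m B^t* = 1%:M -> \tr (A *m A^t*) <= (\rank A)%:R.
Proof.
move=> AB1; have [W Wu AWW] := unitary_row_basis (A^t*).
have AE : A = W^t* *m W *m A.
  by have := congr1 (fun X => X^t*) AWW; rewrite !trmxC_mul !trmxCK mulmxA => ->.
rewrite [X in \tr (X *m _)]AE -!mulmxA mxtrace_mulC !mulmxA -(mulmxA W A).
have -> : A *m A^t* = 1%:M - B *m B^t* by rewrite -AB1 addrK.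
rewrite mulmxBr mulmx1 mulmxBl raddfB /= (unitarymxP Wu) mxtrace1.
rewrite -(mxrank_trmxC A) gerBl -!mulmxA (mulmxA W) -trmxC_mul.
exact: mxtrace_mul_trmxC_ge0.
Qed.

Lemma mxrank_add_ortho_le m n p (A : 'M[C]_(m, n)) (B : 'M[C]_(p, n)) :
  A *m B^t* = 0 -> (\rank A + \rank B <= n)%N.
Proof.
move/sub_kermxP/mxrankS; rewrite mxrank_ker mxrank_trmxC.
by have := rank_leq_col B; lia.
Qed.

End TraceForm.

Section SqrtDiag.
Variable R : rcfType.

Definition sqrt_diag n (f : 'I_n -> R) : 'M[R[i]]_n :=
  diag_mx (\row_k (Num.sqrt (f k))%:C%C).

Lemma sqrt_diag_mul_trmxC n (f g : 'I_n -> R) :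
  sqrt_diag f *m (sqrt_diag g)^t* =
  diag_mx (\row_k (Num.sqrt (f k) * Num.sqrt (g k))%:C%C).
Proof.
rewrite tr_diag_mx map_diag_mx mulmx_diag; congr diag_mx; apply/rowP => k.
by rewrite !mxE rmorphM; congr (_ * _); exact: conjc_real.
Qed.

Lemma sqrt_diag_mul_trmxC_id n (f : 'I_n -> R) : (forall k, 0 <= f k) ->
  sqrt_diag f *m (sqrt_diag f)^t* = diag_mx (\row_k (f k)%:C%C).
Proof.
move=> f_ge0; rewrite sqrt_diag_mul_trmxC; congr diag_mx; apply/rowP => k.
by rewrite !mxE -expr2 sqr_sqrtr.
Qed.

Lemma mxtrace_sqrt_diag n (f : 'I_n -> R) : (forall k, 0 <= f k) ->
  \tr (sqrt_diag f *m (sqrt_diag f)^t*) = (\sum_k f k)%:C%C.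
Proof.
move=> f_ge0; rewrite sqrt_diag_mul_trmxC_id // mxtrace_diag rmorph_sum.
by apply: eq_bigr => k _; rewrite mxE.
Qed.

Lemma sqrt_diag_mul_trmxC_compl n (f : 'I_n -> R) : (forall k, 0 <= f k <= 1) ->
  sqrt_diag f *m (sqrt_diag f)^t* +
  sqrt_diag (fun k => 1 - f k) *m (sqrt_diag (fun k => 1 - f k))^t* = 1%:M.
Proof.
move=> f01; have f_ge0 k : 0 <= f k by case/andP: (f01 k).
have f_le1 k : 0 <= 1 - f k by rewrite subr_ge0; case/andP: (f01 k).
rewrite !sqrt_diag_mul_trmxC_id //.
apply/matrixP => i j; rewrite !mxE -mulrnDl -rmorphD /= addrC subrK.
by rewrite rmorph1.
Qed.

Lemma sqrt_diag_mul_trmxC_eq0 n (f g : 'I_n -> R) :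
  (forall k, f k = 0 \/ g k = 0) -> sqrt_diag f *m (sqrt_diag g)^t* = 0.
Proof.
move=> fg0; rewrite sqrt_diag_mul_trmxC; apply/matrixP => i j; rewrite !mxE.
by case: (fg0 i) => ->; rewrite sqrtr0 ?mul0r ?mulr0 rmorph0 mul0rn.
Qed.

End SqrtDiag.

Section Block.
Variable R : numFieldType.

Definition block n (l r : nat) (x : R) (k : 'I_n) : R :=
  if (l <= k < l + r)%N then x / r%:R else 0.

Lemma block_ge0_le1 n l r x (k : 'I_n) :
  0 <= x <= r%:R -> 0 <= block l r x k <= 1.
Proof.
rewrite /block; case: ifP => [_ /andP[x0 xr]|_ _]; last by rewrite lexx ler01.
have [->|r0] := eqVneq r 0%N; first by rewrite invr0 mulr0 lexx ler01.
by rewrite divr_ge0 ?ler0n //= ler_pdivrMr ?ltr0n ?lt0n // mul1r.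
Qed.

Lemma sum_block n l r x : (l + r <= n)%N -> 0 <= x <= r%:R ->
  \sum_(k < n) block l r x k = x.
Proof.
move=> lrn /andP[x0 xr].
transitivity (\sum_(l <= k < l + r) (x / r%:R)).
  rewrite (big_nat_widen _ _ _ _ _ lrn) big_geq_mkord [RHS]big_mkcond /=.
  by apply: eq_bigr => k _; rewrite /block andbC.
rewrite sumr_const_nat addKn.
have [r0|r0] := eqVneq r 0%N.
  by move: xr; rewrite r0 mulr0n => xr; apply/le_anti; rewrite xr x0.
by rewrite -(mulr_natr (x / r%:R)) divfK ?pnatr_eq0.
Qed.

Lemma block_disjoint n r t x y (k : 'I_n) :
  block 0 r x k = 0 \/ block r t y k = 0.
Proof.
by rewrite /block add0n; case: (ltnP k r) => _; [right | left; rewrite andbF].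
Qed.

End Block.

Local Notation i0 := (@Ordinal 3 0 isT).
Local Notation i1 := (@Ordinal 3 1 isT).
Local Notation i2 := (@Ordinal 3 2 isT).

Lemma sum_ord3 (V : nmodType) (F : 'I_3 -> V) :
  \sum_(i < 3) F i = F i0 + F i1 + F i2.
Proof.
rewrite !big_ord_recr big_ord0 /= add0r.
by congr (F _ + F _ + F _); apply: val_inj.
Qed.

Section Brac3.
Variable R : realType.

Lemma vec3_eta (a : 'I_3 -> R) : a = vec3 (a i0) (a i1) (a i2).
Proof.
by apply: functional_extensionality => -[[|[|[|?]]] ?] //=; congr a; apply: val_inj.
Qed.

Lemma simplex_vec3 (x0 x1 x2 : R) : 0 <= x0 -> 0 <= x1 -> 0 <= x2 ->
  x0 + x1 + x2 = 1 -> simplex (vec3 x0 x1 x2).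
Proof. by move=> *; split; [case=> -[|[|[|?]]] | rewrite sum_ord3]. Qed.

Lemma simplex_vec3_zero2 (a : 'I_3 -> R) : simplex a -> a i2 = 0 ->
  0 <= a i0 <= 1 /\ a = vec3 (a i0) (1 - a i0) 0.
Proof.
move=> [a_ge0 a_sum] a2; rewrite sum_ord3 a2 addr0 in a_sum.
have a0 := a_ge0 i0; have a1 := a_ge0 i1.
split; first by apply/andP; split; lra.
by rewrite {1}[a]vec3_eta a2; congr vec3; lra.
Qed.

Lemma simplex_vec3_zero1 (a : 'I_3 -> R) : simplex a -> a i1 = 0 ->
  0 <= a i0 <= 1 /\ a = vec3 (a i0) 0 (1 - a i0).
Proof.
move=> [a_ge0 a_sum] a1; rewrite sum_ord3 a1 addr0 in a_sum.
have a0 := a_ge0 i0; have a2 := a_ge0 i2.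
split; first by apply/andP; split; lra.
by rewrite {1}[a]vec3_eta a1; congr vec3; lra.
Qed.

Lemma ceil_natP (x : R) : 0 <= x -> exists2 r : nat, Num.ceil x = r%:Z & x <= r%:R.
Proof.
move=> x0; have c0 : 0 <= Num.ceil x by rewrite ceil_ge0 (lt_le_trans _ x0) ?ltrN10.
exists `|Num.ceil x|%N; first by rewrite gez0_abs.
by rewrite natr_absz ger0_norm ?ceil_ge.
Qed.

Lemma ceil_le_mxrank m n p (A : 'M[R[i]]_(m, n)) (B : 'M[R[i]]_(m, p)) (x : R) :
  A *m A^t* + B *m B^t* = 1%:M -> \tr (A *m A^t*) = x%:C%C ->
  Num.ceil x <= (\rank A)%:Z.
Proof.
move=> AB1 trA; rewrite ceil_le_int; change (x <= (\rank A)%:R).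
by rewrite -lecR rmorph_nat -trA (mxtrace_mul_trmxC_le_rank AB1).
Qed.

Lemma Brac3_ceil_le s (a b : 'I_3 -> R) : Brac s a b -> a i2 = 0 -> b i1 = 0 ->
  Num.ceil (a i0 * s%:R) + Num.ceil (b i0 * s%:R) <= s%:Z.
Proof.
move=> [_ [_ [A [B [A_id [B_id [AB0 [trA trB]]]]]]]] a2 b1.
have A2 : A i2 = 0.
  by apply/eqP; rewrite -mxtrace_mul_trmxC_eq0; apply/eqP; rewrite [LHS]trA a2 mulr0.
have B1 : B i1 = 0.
  by apply/eqP; rewrite -mxtrace_mul_trmxC_eq0; apply/eqP; rewrite [LHS]trB b1 mulr0.
rewrite !sum_ord3 A2 B1 /adj !(mul0mx, mulmx0, map_mx0, trmx0, addr0) in A_id B_id AB0.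
apply: le_trans (lerD (ceil_le_mxrank A_id _) (ceil_le_mxrank B_id _)) _.
- by rewrite [LHS]trA mulrC.
- by rewrite [LHS]trB mulrC.
by rewrite -PoszD lez_nat mxrank_add_ortho_le.
Qed.

Lemma Brac3_of_sqrt_diag s (f g : 'I_s -> R) (x y : R) :
  0 <= x <= 1 -> 0 <= y <= 1 ->
  (forall k, 0 <= f k <= 1) -> (forall k, 0 <= g k <= 1) ->
  (forall k, f k = 0 \/ g k = 0) ->
  \sum_k f k = x * s%:R -> \sum_k g k = y * s%:R ->
  Brac s (vec3 x (1 - x) 0) (vec3 y 0 (1 - y)).
Proof.
move=> /andP[x0 x1] /andP[y0 y1] f01 g01 fg0 f_sum g_sum.
have f_ge0 k : 0 <= f k by case/andP: (f01 k).
have g_ge0 k : 0 <= g k by case/andP: (g01 k).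
have fC_ge0 k : 0 <= 1 - f k by rewrite subr_ge0; case/andP: (f01 k).
have gC_ge0 k : 0 <= 1 - g k by rewrite subr_ge0; case/andP: (g01 k).
have sumC h : \sum_(k < s) (1 - h k) = s%:R - \sum_k h k.
  by rewrite sumrB sumr_const card_ord.
split; first by apply: simplex_vec3; lra.
split; first by apply: simplex_vec3; lra.
exists (fun i : 'I_3 => match val i with
  | 0 => sqrt_diag f | 1 => sqrt_diag (fun k => 1 - f k) | _ => 0 end).
exists (fun i : 'I_3 => match val i with
  | 0 => sqrt_diag g | 1 => 0 | _ => sqrt_diag (fun k => 1 - g k) end).
rewrite !sum_ord3 /adj /= !(mul0mx, mulmx0, map_mx0, trmx0, addr0).
split; first exact: sqrt_diag_mul_trmxC_compl.
split; first exact: sqrt_diag_mul_trmxC_compl.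
split; first exact: sqrt_diag_mul_trmxC_eq0.
split=> -[[|[|[|?]]] ?] //=;
  rewrite /vec3 /= ?mul0mx ?mxtrace0 ?mxtrace_sqrt_diag ?sumC ?f_sum ?g_sum //;
  rewrite ?mulr0 ?rmorph0 //; congr (_%:C)%C; ring.
Qed.

Lemma Brac3_of_ceil s (x y : R) : 0 <= x <= 1 -> 0 <= y <= 1 ->
  Num.ceil (x * s%:R) + Num.ceil (y * s%:R) <= s%:Z ->
  Brac s (vec3 x (1 - x) 0) (vec3 y 0 (1 - y)).
Proof.
move=> x01 y01 xy_s.
have xs0 : 0 <= x * s%:R by case/andP: x01 => x0 _; rewrite mulr_ge0.
have ys0 : 0 <= y * s%:R by case/andP: y01 => y0 _; rewrite mulr_ge0.
have [r xr xsr] := ceil_natP xs0.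
have [t yt yst] := ceil_natP ys0.
have rts : (r + t <= s)%N by rewrite -lez_nat PoszD -xr -yt.
apply: (@Brac3_of_sqrt_diag s (block 0 r (x * s%:R)) (block r t (y * s%:R))) => //.
- by move=> k; rewrite block_ge0_le1 // xs0 xsr.
- by move=> k; rewrite block_ge0_le1 // ys0 yst.
- exact: block_disjoint.
- by rewrite sum_block ?xs0 ?xsr // add0n (leq_trans (leq_addr t r) rts).
- by rewrite sum_block ?ys0 ?yst.
Qed.

End Brac3.

Theorem proposition3p10 (R : realType) (s : nat) (hs : (1 <= s)%N)
    (a b : 'I_3 -> R) :
  (@Brac R 3 s a b /\ a (@Ordinal 3 2 isT) = 0 /\ b (@Ordinal 3 1 isT) = 0) <->
  (exists a1 b1 : R,
     0 <= a1 <= 1 /\ 0 <= b1 <= 1 /\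
     (Num.ceil (a1 * s%:R) + Num.ceil (b1 * s%:R) <= s%:Z)%R /\
     a = vec3 a1 (1 - a1) 0 /\ b = vec3 b1 0 (1 - b1)).
Proof.
split.
- case=> Bab [a2 b1].
  have [a01 aE] := simplex_vec3_zero2 Bab.1 a2.
  have [b01 bE] := simplex_vec3_zero1 Bab.2.1 b1.
  exists (a i0), (b i0); split=> //; split=> //; split=> //.
  exact: Brac3_ceil_le.
- by case=> x [y [x01 [y01 [xy_s [-> ->]]]]]; split; first exact: Brac3_of_ceil.
Qed.
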